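(* Let $k>1$ and let $\mathcal P$ be any $k$-pattern in $\mathbb R$ under direct similarity. If $n$ is a positive integer and $r$ is the remainder when $n$ is divided by $k-1$, then $S_{\mathcal P}(n)\le (n-r)(n+r-k+1)/(2k-2)$.
   Context: A direct similarity of $\mathbb R$ is a map $x\mapsto ax+b$ with $a>0$, $b\in\mathbb R$. A $k$-pattern in $\mathbb R$ under direct similarity is the set $\mathcal P$ of all images of a fixed $k$-element set $P_0\subseteq\mathbb R$ under direct similarities. For finite $V\subseteq\mathbb R$, $S_{\mathcal P}(V)=|\{P\subseteq V:P\in\mathcal P\}|$ and $S_{\mathcal P}(n)=\max\{S_{\mathcal P}(V):V\subseteq\mathbb R,\ |V|=n\}$. *)

From Stdlib Require Import Reals ClassicalEpsilon.
From mathcomp Require Import all_boot.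
Delimit Scope R_scope with Rs.
Set Implicit Arguments. Unset Strict Implicit. Unset Printing Implicit Defensive.

Definition pb (P : Prop) : bool :=
  if excluded_middle_informative P then true else false.

Definition in_pattern (k : nat) (P0 : 'I_k -> R) (S : R -> Prop) : Prop :=
  exists a b : R, (0 < a)%Rs /\
    forall x : R, S x <-> exists j : 'I_k, x = (a * P0 j + b)%Rs.

(* S_P(V): number of subsets of V = {V i | i < n} (V injective) lying in the
   pattern generated by P0.  Subsets of V correspond bijectively to subsets
   of the index set 'I_n since V is injective. *)
Definition S_count (k : nat) (P0 : 'I_k -> R) (n : nat) (V : 'I_n -> R) : nat :=
  #|[set A : {set 'I_n} |
      pb (in_pattern P0 (fun x => exists i : 'I_n, i \in A /\ V i = x))]|.

(* Sort the n points and cut the ranks 0..n-1 into k-1 consecutive blocks, as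
   equal as possible: r blocks of length q+1 and k-1-r blocks of length q,
   where n = q(k-1) + r.  In any occurrence of the pattern, its k points fall
   into k-1 blocks, so two points that are consecutive in the pattern lie in a
   common block; choosing them well, the block index even tells which two
   pattern points they are.  An occurrence is therefore determined by a pair of
   points in a common block (two points fix a direct similarity), and there are
   r C(q+1,2) + (k-1-r) C(q,2) such pairs, which is the stated bound. *)
From Stdlib Require Import Reals Lra Psatz Classical ClassicalEpsilon.
From mathcomp Require Import all_boot zify.

(* Positions are split into r blocks of length q+1 followed by blocks of
   length q; [block_of b] is the index of the block of position b and
   [block_start b] the first position of that block. *)
Section Blocks.
Variables q r : nat.
Let M := r * q.+1.

Definition block_start (b : nat) : nat :=
  if b < M then b %/ q.+1 * q.+1 else M + (b - M) %/ q * q.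
Definition block_of (b : nat) : nat :=
  if b < M then b %/ q.+1 else r + (b - M) %/ q.

Lemma block_of_mono a b : a <= b -> block_of a <= block_of b.
Proof.
move=> ab; rewrite /block_of.
case: ifP => aM; case: ifP => bM.
- exact: leq_div2r.
- by apply: leq_trans (leq_addr _ _); rewrite ltnW // ltn_divLR.
- by move: aM bM; lia.
- by rewrite leq_add2l leq_div2r // leq_sub2r.
Qed.

Lemma block_of_lt K b : r < K -> b < q * K + r -> block_of b < K.
Proof.
move=> rK bn; rewrite /block_of; case: ifP => bM.
  by rewrite (leq_trans _ (ltnW rK)) // ltn_divLR.
have q_gt0 : 0 < q by case: (posnP q) => [q0|//]; move: bn bM; rewrite /M q0; lia.
suff : (b - M) %/ q < K - r by lia.
rewrite ltn_divLR // mulnBl.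
have : r * q <= K * q by rewrite leq_mul2r ltnW ?orbT.
by move: bn bM; rewrite /M mulnS mulnC; lia.
Qed.

Lemma block_start_le b : block_start b <= b.
Proof.
rewrite /block_start; case: ifP => bM; first exact: leq_divM.
by have := leq_divM (b - M) q; move: bM; lia.
Qed.

Lemma block_of_lt_start a b : a < block_start b -> block_of a < block_of b.
Proof.
rewrite /block_start /block_of => h; case: ifP h => bM h.
  have aM : a < M by apply: leq_trans h (leq_trans (leq_divM _ _) (ltnW bM)).
  by rewrite aM ltn_divLR.
case: ifP => aM; first by apply: leq_trans (leq_addr _ _); rewrite ltn_divLR.
have q_gt0 : 0 < q by case: (posnP q) => [q0|//]; move: h aM; rewrite /M q0; lia.
by rewrite ltn_add2l ltn_divLR //; move: h aM; lia.
Qed.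
End Blocks.

Lemma card_pairs_from_start n (s : nat -> nat) : (forall b, s b <= b) ->
  #|[set p : 'I_n * 'I_n | (s p.2 <= p.1) && (p.1 < p.2)]| = \sum_(b < n) (b - s b).
Proof.
move=> s_le.
rewrite -sum1_card big_mkcond /=.
under eq_bigr => p _ do rewrite inE.
rewrite -(pair_big xpredT xpredT (fun a b : 'I_n =>
  if (s b <= a) && (a < b) then 1 else 0)) /= exchange_big /=.
apply: eq_bigr => b _.
rewrite -(big_mkord xpredT (fun a => if (s b <= a) && (a < b) then 1 else 0)).
have sb_n : s b <= n by apply: leq_trans (s_le b) (ltnW (ltn_ord b)).
rewrite (@big_cat_nat _ _ _ (s b)) //=.
rewrite (@big_cat_nat _ _ _ b (s b)) ?s_le //=; last exact: ltnW.
rewrite big1_seq => [|i /andP[_]]; last first.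
  by rewrite mem_index_iota => /andP[_ h]; rewrite leqNgt h.
rewrite [X in _ + (_ + X)]big1_seq => [|i /andP[_]]; last first.
  by rewrite mem_index_iota => /andP[h _]; rewrite ltnNge h andbF.
rewrite add0n addn0 (eq_big_seq (fun _ => 1)); last first.
  by move=> i; rewrite mem_index_iota => /andP[h1 h2]; rewrite h1 h2.
by rewrite sum_nat_const_nat muln1.
Qed.

Lemma sum_modn_mul m d : \sum_(0 <= b < m * d) (b %% d) = m * 'C(d, 2).
Proof.
elim: m => [|m IH]; first by rewrite !mul0n big_geq.
rewrite mulSn (@big_cat_nat _ _ _ (m * d)) /= ?leq_addl //.
rewrite IH mulSn addnC; congr (_ + _).
rewrite -{1}(add0n (m * d)) big_addn addnK -bin2_sum.
apply: eq_big_seq => i; rewrite mem_index_iota => /andP[_ h].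
by rewrite addnC modnMDl modn_small.
Qed.

Lemma sum_block_offsets {K r} q : r <= K ->
  \sum_(b < q * K + r) (b - block_start q r b) =
  r * 'C(q.+1, 2) + (K - r) * 'C(q, 2).
Proof.
move=> rK.
have M_le : r * q.+1 <= q * K + r by rewrite mulnS addnC leq_add2r mulnC leq_mul2l rK orbT.
rewrite -(big_mkord xpredT (fun b => b - block_start q r b)).
rewrite (@big_cat_nat _ _ _ (r * q.+1)) //=.
congr (_ + _).
  rewrite -sum_modn_mul; apply: eq_big_seq => b; rewrite mem_index_iota => /andP[_ h].
  by rewrite /block_start h {1}(divn_eq b q.+1) addKn.
rewrite -{1}(add0n (r * q.+1)) big_addn.
have -> : q * K + r - r * q.+1 = (K - r) * q by rewrite mulnBl mulnS; lia.
rewrite -sum_modn_mul; apply: eq_big_seq => i; rewrite mem_index_iota => /andP[_ h].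
rewrite /block_start ltnNge leq_addl /= addnK [i + _]addnC subnDl.
by rewrite {1}(divn_eq i q) addKn.
Qed.

Lemma bin2_double d : 'C(d, 2) * 2 + d = d * d.
Proof. by elim: d => [//|d IH]; rewrite binS bin1; lia. Qed.

Lemma block_pair_count_INR {k} n : 1 < k ->
  let K := k - 1 in let q := n %/ K in let r := n %% K in
  INR (r * 'C(q.+1, 2) + (K - r) * 'C(q, 2)) =
  ((INR n - INR r) * (INR n + INR r - INR k + 1) / (2 * INR k - 2))%Rs.
Proof.
move=> k_gt1 K q r.
have K_gt0 : 0 < K by rewrite /K subn_gt0.
have r_le : r <= K by rewrite ltnW // ltn_mod.
have -> : n = q * K + r by rewrite /q /r -divn_eq.
have -> : k = K + 1 by rewrite /K subnK // ltnW.
have bin2_INR d : INR 'C(d, 2) = (INR d * (INR d - 1) / 2)%Rs.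
  have := congr1 INR (bin2_double d).
  rewrite -!plusE -!multE plus_INR !mult_INR /=; lra.
have KR : (0 < INR K)%Rs by apply: lt_0_INR; apply/ltP.
rewrite -!plusE -!multE -minusE !plus_INR !mult_INR minus_INR; last exact/leP.
rewrite !bin2_INR S_INR /=; field; lra.
Qed.

Lemma pbP (P : Prop) : reflect P (pb P).
Proof. by rewrite /pb; case: excluded_middle_informative => h; constructor. Qed.

Lemma card_le_of_rel (aT rT : finType) (S : {set aT}) (T : {set rT})
    (Rel : aT -> rT -> Prop) :
  (forall A, A \in S -> exists2 p, p \in T & Rel A p) ->
  (forall A A' p, Rel A p -> Rel A' p -> A = A') ->
  #|S| <= #|T|.
Proof.
move=> total functional.
have [T0 | [p0 _]] := set_0Vmem T.
  rewrite T0 cards0 leqn0 cards_eq0; apply/eqP/setP => A; rewrite inE.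
  by apply/negP => /total [p]; rewrite T0 inE.
pose f A := odflt p0 [pick p in T | pb (Rel A p)].
have fP A : A \in S -> f A \in T /\ Rel A (f A).
  move=> AS; rewrite /f; case: pickP => [p /andP[pT /pbP] | none] //=.
  have [p pT /pbP Ap] := total A AS.
  by have := none p; rewrite pT Ap.
rewrite -(card_in_imset (f := f)) => [|A A' AS A'S e]; last first.
  by have [_ fA] := fP A AS; have [_ fA'] := fP A' A'S; rewrite e in fA; exact: functional fA fA'.
by apply: subset_leq_card; apply/subsetP => _ /imsetP[A AS ->]; case: (fP A AS).
Qed.

Section Rank.
Variables (m : nat) (g : 'I_m -> R).

Definition rank (i : 'I_m) : nat := #|[set j : 'I_m | pb (g j < g i)%Rs]|.

Lemma rank_le i j : (g i <= g j)%Rs -> rank i <= rank j.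
Proof.
move=> h; apply: subset_leq_card; apply/subsetP => x; rewrite !inE.
by move/pbP => hx; apply/pbP; lra.
Qed.

Lemma rank_lt i j : (g i < g j)%Rs -> rank i < rank j.
Proof.
move=> h; apply: proper_card; apply/properP; split.
  by apply/subsetP => x; rewrite !inE => /pbP hx; apply/pbP; lra.
by exists i; rewrite !inE; apply/pbP => //; lra.
Qed.

Lemma rank_ltn i : rank i < m.
Proof.
rewrite -[X in _ < X](card_ord m); apply: proper_card; apply/properP.
by split; [apply/subsetP | exists i; rewrite ?inE //; apply/pbP; lra].
Qed.

Lemma rank_lt_inv i j : rank i < rank j -> (g i < g j)%Rs.
Proof.
move=> h; case: (Rlt_le_dec (g i) (g j)) => // /rank_le.
by rewrite leqNgt h.
Qed.

Definition ord_rank i : 'I_m := Ordinal (rank_ltn i).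

Hypothesis g_inj : injective g.

Lemma rank_inj : injective rank.
Proof.
move=> i j e; apply: g_inj.
by case: (Rtotal_order (g i) (g j)) => [/rank_lt|[//|/rank_lt]]; rewrite e ltnn.
Qed.

Lemma ord_rank_inj : injective ord_rank.
Proof. by move=> i j /(congr1 val) /rank_inj. Qed.

Lemma rank_onto l : l < m -> exists j, rank j = l.
Proof.
move=> lm; exists (invF ord_rank_inj (Ordinal lm)).
by have /(congr1 val) := f_invF ord_rank_inj (Ordinal lm).
Qed.
End Rank.
Arguments rank {m} g i.
Arguments ord_rank {m} g i.
Arguments rank_lt {m g i j}.
Arguments rank_lt_inv {m g i j}.
Arguments rank_inj {m g} g_inj [x1 x2].
Arguments ord_rank_inj {m g} g_inj [x1 x2].
Arguments rank_onto {m g} g_inj [l].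

Lemma exists_exit_step (P : nat -> Prop) m :
  P 0 -> ~ P m -> exists l, l < m /\ P l /\ ~ P l.+1.
Proof.
elim: m => [//|m IH] P0 Pm.
case: (classic (P m)) => [Pm' | nPm]; first by exists m.
by have [l [lm Pl]] := IH P0 nPm; exists l; split => //; apply: ltnW.
Qed.

Lemma affine_eq_of_two_points {a b a' b' x y : R} : x <> y ->
  (a * x + b = a' * x + b')%Rs -> (a * y + b = a' * y + b')%Rs -> a = a' /\ b = b'.
Proof.
move=> xy ex ey.
have : ((a - a') * (x - y) = 0)%Rs by lra.
case/Rmult_integral => h; last by exfalso; apply: xy; lra.
have ea : a = a' by lra.
by subst a'; split => //; lra.
Qed.

Section Occurrences.
Variables (k : nat) (P0 : 'I_k -> R) (n : nat) (V : 'I_n -> R).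
Hypotheses (k_gt1 : 1 < k) (P0_inj : injective P0) (V_inj : injective V).
Let K := k - 1.
Let q := n %/ K.
Let r := n %% K.

Definition image_of (A : {set 'I_n}) (a b : R) : Prop :=
  forall x, (exists i, i \in A /\ V i = x) <-> exists j, x = (a * P0 j + b)%Rs.

Lemma image_of_inj A A' a b : image_of A a b -> image_of A' a b -> A = A'.
Proof.
suff sub B B' : image_of B a b -> image_of B' a b -> {subset B <= B'}.
  by move=> hA hA'; apply/setP => i; apply/idP/idP; apply: sub.
move=> hB hB' i iB.
have [j Vi] : exists j, V i = (a * P0 j + b)%Rs by apply/hB; exists i.
have [i' [i'B' Vi']] : exists i', i' \in B' /\ V i' = V i by apply/hB'; exists j.
by rewrite -(V_inj _ _ Vi').
Qed.

Definition block_pairs : {set 'I_n * 'I_n} :=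
  [set p : 'I_n * 'I_n | (block_start q r p.2 <= p.1) && (p.1 < p.2)].

Definition anchored_at (A : {set 'I_n}) (p : 'I_n * 'I_n) : Prop :=
  exists a b : R, image_of A a b /\
   exists j1 j2 i1 i2, let l := block_of q r p.2 in
     [/\ rank P0 j1 = l, rank P0 j2 = l.+1, (ord_rank V i1, ord_rank V i2) = p,
         V i1 = (a * P0 j1 + b)%Rs & V i2 = (a * P0 j2 + b)%Rs].

Lemma consecutive_in_block {a b : R} : (0 < a)%Rs ->
  (forall j, exists i, V i = (a * P0 j + b)%Rs) ->
  exists j1 j2 i1 i2, let l := block_of q r (rank V i1) in
   [/\ rank P0 j1 = l, rank P0 j2 = l.+1, block_of q r (rank V i2) = l,
       V i1 = (a * P0 j1 + b)%Rs & V i2 = (a * P0 j2 + b)%Rs].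
Proof.
move=> a_gt0 img.
(* Along the pattern points of ranks 0, 1, ..., k-1 the block indices of their
   images are nondecreasing and stay below k-1; at the first rank l + 1 whose
   block index drops below it, the points of ranks l and l+1 share block l. *)
pose reaches l := exists j i, [/\ rank P0 j = l, V i = (a * P0 j + b)%Rs
                                & l <= block_of q r (rank V i)].
have reaches0 : reaches 0.
  have [j j0] := rank_onto P0_inj (ltnW k_gt1).
  by have [i Vi] := img j; exists j, i.
have not_reachesK : ~ reaches K.
  move=> [j [i [_ _]]]; rewrite leqNgt.
  have n_eq : n = q * K + r by rewrite /q /r -divn_eq.
  by rewrite (@block_of_lt q r K) ?ltn_mod ?subn_gt0 // -n_eq rank_ltn.
have [l [lK [[j1 [i1 [j1l Vi1 l_le1]]] not_reaches]]] :=
  exists_exit_step _ _ reaches0 not_reachesK.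
have l1k : l.+1 < k by move: lK; rewrite /K; lia.
have [j2 j2l] := rank_onto P0_inj l1k.
have [i2 Vi2] := img j2.
have blk2 : block_of q r (rank V i2) <= l.
  by rewrite leqNgt; apply/negP => h; apply: not_reaches; exists j2, i2.
have P0lt : (P0 j1 < P0 j2)%Rs by apply: rank_lt_inv; rewrite j1l j2l.
have : (V i1 < V i2)%Rs by rewrite Vi1 Vi2; nra.
move=> /rank_lt /ltnW /(block_of_mono q r) blk_mono.
have blk1 : block_of q r (rank V i1) = l by lia.
by exists j1, j2, i1, i2; rewrite blk1; split => //; lia.
Qed.

Lemma anchored_at_exists (A : {set 'I_n}) :
  in_pattern P0 (fun x => exists i, i \in A /\ V i = x) ->
  exists2 p, p \in block_pairs & anchored_at A p.
Proof.
move=> [a [b [a_gt0 hA]]].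
have img j : exists i, V i = (a * P0 j + b)%Rs.
  by have [i [_ Vi]] := proj2 (hA _) (ex_intro _ j erefl); exists i.
have [j1 [j2 [i1 [i2 [j1l j2l blk2 Vi1 Vi2]]]]] := consecutive_in_block a_gt0 img.
have P0lt : (P0 j1 < P0 j2)%Rs by apply: rank_lt_inv; rewrite j1l j2l.
have Vlt : (V i1 < V i2)%Rs by rewrite Vi1 Vi2; nra.
exists (ord_rank V i1, ord_rank V i2).
  rewrite inE /= rank_lt // andbT leqNgt; apply/negP => /block_of_lt_start.
  by rewrite blk2 ltnn.
by exists a, b; split => //; exists j1, j2, i1, i2; rewrite /= blk2.
Qed.

Lemma anchored_at_unique A A' p : anchored_at A p -> anchored_at A' p -> A = A'.
Proof.
move=> [a [b [hA [j1 [j2 [i1 [i2 [j1l j2l ip Vi1 Vi2]]]]]]]].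
move=> [a' [b' [hA' [j1' [j2' [i1' [i2' [j1l' j2l' ip' Vi1' Vi2']]]]]]]].
have ej1 : j1' = j1 by apply: (rank_inj P0_inj); rewrite j1l j1l'.
have ej2 : j2' = j2 by apply: (rank_inj P0_inj); rewrite j2l j2l'.
move: ip'; rewrite -{}ip => -[/(rank_inj V_inj) ei1 /(rank_inj V_inj) ei2].
subst j1' j2' i1' i2'.
have j12 : P0 j1 <> P0 j2 by move=> /P0_inj e; move: j2l; rewrite -e j1l; lia.
have [ea eb] := affine_eq_of_two_points j12 (etrans (esym Vi1) Vi1') (etrans (esym Vi2) Vi2').
subst a' b'.
exact: image_of_inj hA hA'.
Qed.

Lemma S_count_le_block_pairs : S_count P0 V <= #|block_pairs|.
Proof.
apply: (@card_le_of_rel _ _ _ _ anchored_at) => [A|]; last exact: anchored_at_unique.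
by rewrite inE => /pbP; apply: anchored_at_exists.
Qed.

Lemma card_block_pairs : #|block_pairs| = r * 'C(q.+1, 2) + (K - r) * 'C(q, 2).
Proof.
rewrite card_pairs_from_start; last exact: block_start_le.
have n_eq : n = q * K + r by rewrite /q /r -divn_eq.
have r_le : r <= K by rewrite ltnW // ltn_mod subn_gt0.
by have := sum_block_offsets q r_le; rewrite -n_eq.
Qed.
End Occurrences.

Theorem mainTheorem5 (k : nat) (hk : (1 < k)%N) (P0 : 'I_k -> R)
  (hP0 : injective P0) (n : nat) (hn : (0 < n)%N) :
  let r := (n %% (k - 1))%N in
  forall V : 'I_n -> R, injective V ->
  (INR (S_count P0 V) <=
     (INR n - INR r) * (INR n + INR r - INR k + 1) / (2 * INR k - 2))%Rs.
Proof.
move=> r V hV.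
rewrite -(block_pair_count_INR n hk) -(card_block_pairs _ _ hk).
exact/le_INR/leP/(S_count_le_block_pairs _ _ _ _ hk hP0 hV).
Qed.
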